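(* Let $n\ge2$, $m\ge2$, and let $M$ be a nonderogatory $m\times m$ matrix with minimal polynomial $\mathbf p(X)=X^m$. Let $k_+,k_-$ be integers with $1\le k_+,k_-\le m-1$ and $k_++k_-=m$. Then the algebra $\mathfrak B(X^{k_+},X^{k_-},\mathbf 1)$ is not a pseudocirculant algebra, i.e. there are no $A,B\in\mathcal P(M)$ with $\ker A\cap\ker B=\{0\}$ such that $\mathfrak B(X^{k_+},X^{k_-},\mathbf 1)=\mathcal F^{\mathcal P(M)}_{A,B}$.
   Context: $\mathcal P(M)$ is the algebra of polynomials in $M$. $\mathfrak B(\mathbf p_+,\mathbf p_-,\boldsymbol\chi)$ (for $\mathbf p_+\mathbf p_-\mid\mathbf p$, $\boldsymbol\chi$ coprime to $\mathbf p$, $\mathbf q=\mathbf p/(\mathbf p_+\mathbf p_-)$) is the set of $n\times n$ block Toeplitz matrices $A=(A_{i-j})_{i,j=0}^{n-1}$ with all $A_i\in\mathcal P(M)$ such that for each $i=1,\dots,n-1$ there are polynomials $\mathbf a_i,\mathbf a_{i-n}$ with $A_i=\mathbf p_+(M)\mathbf a_i(M)$, $A_{i-n}=\mathbf p_-(M)\mathbf a_{i-n}(M)$ and $\mathbf q\mid\mathbf a_i-\boldsymbol\chi\mathbf a_{i-n}$; here $\mathbf 1$ is the constant polynomial $1$. For $A,B\in\mathcal P(M)$, $\mathcal F^{\mathcal P(M)}_{A,B}$ is the set of $n\times n$ block Toeplitz matrices $(T_{p-q})_{p,q=0}^{n-1}$ with all $T_j\in\mathcal P(M)$ and $AT_j=BT_{j-n}$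 for $j=1,\dots,n-1$; it is called a pseudocirculant algebra when $\ker A\cap\ker B=\{0\}$. *)

From HB Require Import structures.
From mathcomp Require Import all_boot all_order all_algebra.
Set Implicit Arguments. Unset Strict Implicit. Unset Printing Implicit Defensive.
Import GRing.Theory.
Local Open Scope ring_scope.

(* Throughout, the matrix size is m = m'.+1 (needed by mxminpoly / horner_mx). *)

Definition inPM (F : fieldType) (m' : nat) (M : 'M[F]_m'.+1) (X : 'M[F]_m'.+1) : Prop :=
  exists p : {poly F}, X = horner_mx M p.

(* An n x n block Toeplitz matrix (A_{i-j})_{i,j=0}^{n-1} is represented by its
   symbol  t : int -> 'M_m ; only the values t j for -(n-1) <= j <= n-1 matter,
   and both predicates below only inspect those values. *)

Definition blocks_in_PM (F : fieldType) (m' : nat) (M : 'M[F]_m'.+1) (n : nat)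
    (t : int -> 'M[F]_m'.+1) : Prop :=
  forall j : int, - ((n%:Z) - 1) <= j <= (n%:Z) - 1 -> inPM M (t j).

(* the set  B(p_+, p_-, chi) ; here p is the minimal polynomial of M,
   q = p / (p_+ p_-). *)
Definition frakB (F : fieldType) (m' : nat) (M : 'M[F]_m'.+1) (n : nat)
    (p pp pm chi : {poly F}) (t : int -> 'M[F]_m'.+1) : Prop :=
  blocks_in_PM M n t /\
  forall i : nat, (1 <= i <= n.-1)%N ->
    exists a_i a_in : {poly F},
      t (i%:Z) = horner_mx M pp * horner_mx M a_i /\
      t (i%:Z - n%:Z) = horner_mx M pm * horner_mx M a_in /\
      (p %/ (pp * pm)) %| (a_i - chi * a_in).

Definition calF (F : fieldType) (m' : nat) (M : 'M[F]_m'.+1) (n : nat)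
    (A B : 'M[F]_m'.+1) (t : int -> 'M[F]_m'.+1) : Prop :=
  blocks_in_PM M n t /\
  forall j : nat, (1 <= j <= n.-1)%N -> A * t (j%:Z) = B * t (j%:Z - n%:Z).

Definition trivial_common_kernel (F : fieldType) (m' : nat) (A B : 'M[F]_m'.+1) : Prop :=
  forall v : 'cV[F]_m'.+1, A *m v = 0 -> B *m v = 0 -> v = 0.

Definition nonderogatory (F : fieldType) (m' : nat) (M : 'M[F]_m'.+1) : Prop :=
  mxminpoly M = char_poly M.

From HB Require Import structures.
From mathcomp Require Import all_boot all_order all_algebra.
From mathcomp Require Import zify.
Set Implicit Arguments. Unset Strict Implicit. Unset Printing Implicit Defensive.
Import GRing.Theory.
Local Open Scope ring_scope.

(* Since k_+ + k_- = m, the quotient q is 1 and B(X^k_+, X^k_-, 1) consists of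
   all symbols whose blocks of positive index are multiples of M^k_+ and whose
   blocks of negative index are multiples of M^k_-.  Testing F_{A,B} against the
   symbols supported at a single index 1 or 1 - n shows A M^k_+ = 0 and
   B M^k_- = 0.  Hence every column of M^(m-1) = M^k_+ M^(k_- - 1)
   = M^k_- M^(k_+ - 1) lies in ker A ∩ ker B, so M^(m-1) = 0, contradicting the
   minimal polynomial X^m. *)

Definition single_block {R : pzRingType} {m : nat} (j0 : int) (X : 'M[R]_m)
    : int -> 'M[R]_m :=
  fun j => if j == j0 then X else 0.

Lemma horner_mx_Xn (R : comNzRingType) (m' : nat) (M : 'M[R]_m'.+1) (k : nat) :
  horner_mx M 'X^k = M ^+ k.
Proof. by rewrite rmorphXn /= horner_mx_X. Qed.

Lemma mxminpolyXn_expr_neq0 (F : fieldType) (m' k : nat) (M : 'M[F]_m'.+1) :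
  mxminpoly M = 'X^(k.+1) -> M ^+ k != 0.
Proof.
move=> minM; apply/eqP => Mk0.
have : mxminpoly M %| 'X^k.
  by apply: mxminpoly_min; rewrite horner_mx_Xn.
move/(dvdp_leq (monic_neq0 (monicXn _ k))).
by rewrite minM !size_polyXn ltnn.
Qed.

Lemma trivial_common_kernel_mulmx (F : fieldType) (m' p : nat)
    (A B : 'M[F]_m'.+1) (C : 'M[F]_(m'.+1, p)) :
  trivial_common_kernel A B -> A *m C = 0 -> B *m C = 0 -> C = 0.
Proof.
move=> hAB AC0 BC0; apply/matrixP => i j.
have col_mulmx (D : 'M[F]_m'.+1) : D *m col j C = col j (D *m C).
  by rewrite !colE mulmxA.
have /colP/(_ i) : col j C = 0 by apply: hAB; rewrite col_mulmx ?AC0 ?BC0 col0.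
by rewrite !mxE.
Qed.

Section SymbolsSupportedAtOneIndex.

Variables (F : fieldType) (m' n : nat) (M : 'M[F]_m'.+1).

Lemma blocks_in_PM_single (j0 : int) (X : 'M[F]_m'.+1) :
  inPM M X -> blocks_in_PM M n (single_block j0 X).
Proof.
move=> [p ->] j _; rewrite /single_block; case: ifP => _; first by exists p.
by exists 0; rewrite rmorph0.
Qed.

Variables (p pp pm chi : {poly F}).
Hypothesis p_quotient1 : p %/ (pp * pm) = 1.

Lemma frakB_quotient1 (t : int -> 'M[F]_m'.+1) :
    blocks_in_PM M n t ->
    (forall i : nat, (1 <= i <= n.-1)%N ->
       (exists a, t i%:Z = horner_mx M pp * horner_mx M a) /\
       (exists b, t (i%:Z - n%:Z) = horner_mx M pm * horner_mx M b)) ->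
  frakB M n p pp pm chi t.
Proof.
move=> tPM ht; split=> // i /ht[[a ta] [b tb]].
by exists a, b; rewrite p_quotient1 dvd1p.
Qed.

Lemma frakB_single_upper (j0 : nat) (a : {poly F}) :
    (1 <= j0 <= n.-1)%N ->
  frakB M n p pp pm chi (single_block j0%:Z (horner_mx M pp * horner_mx M a)).
Proof.
move=> j0_range; apply: frakB_quotient1.
  by apply: blocks_in_PM_single; exists (pp * a); rewrite rmorphM.
move=> i i_range; rewrite /single_block.
have -> : (i%:Z - n%:Z == j0%:Z) = false by apply/negbTE/eqP; lia.
split; last by exists 0; rewrite rmorph0 mulr0.
by case: ifP => _; [exists a | exists 0; rewrite rmorph0 mulr0].
Qed.

Lemma frakB_single_lower (j0 : nat) (b : {poly F}) :
    (1 <= j0 <= n.-1)%N ->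
  frakB M n p pp pm chi
    (single_block (j0%:Z - n%:Z) (horner_mx M pm * horner_mx M b)).
Proof.
move=> j0_range; apply: frakB_quotient1.
  by apply: blocks_in_PM_single; exists (pm * b); rewrite rmorphM.
move=> i i_range; rewrite /single_block.
have -> : (i%:Z == j0%:Z - n%:Z) = false by apply/negbTE/eqP; lia.
split; first by exists 0; rewrite rmorph0 mulr0.
by case: ifP => _; [exists b | exists 0; rewrite rmorph0 mulr0].
Qed.

End SymbolsSupportedAtOneIndex.

Section CalFOnSingleBlocks.

Variables (F : fieldType) (m' n : nat) (M A B : 'M[F]_m'.+1) (j0 : nat).
Hypothesis j0_range : (1 <= j0 <= n.-1)%N.

Lemma calF_single_upper (X : 'M[F]_m'.+1) :
  calF M n A B (single_block j0%:Z X) -> A * X = 0.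
Proof.
case=> _ /(_ j0 j0_range); rewrite /single_block eqxx.
have -> : (j0%:Z - n%:Z == j0%:Z) = false by apply/negbTE/eqP; lia.
by rewrite mulr0.
Qed.

Lemma calF_single_lower (X : 'M[F]_m'.+1) :
  calF M n A B (single_block (j0%:Z - n%:Z) X) -> B * X = 0.
Proof.
case=> _ /(_ j0 j0_range); rewrite /single_block eqxx.
have -> : (j0%:Z == j0%:Z - n%:Z) = false by apply/negbTE/eqP; lia.
by rewrite mulr0.
Qed.

End CalFOnSingleBlocks.

Theorem mainTheorem15 (F : fieldType) (n m' : nat) (M : 'M[F]_m'.+1)
    (kp km : nat) :
  (2 <= n)%N -> (2 <= m'.+1)%N ->
  nonderogatory M -> mxminpoly M = 'X^(m'.+1) ->
  (1 <= kp <= m')%N -> (1 <= km <= m')%N -> (kp + km = m'.+1)%N ->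
  ~ (exists A B : 'M[F]_m'.+1,
        inPM M A /\ inPM M B /\ trivial_common_kernel A B /\
        (forall t : int -> 'M[F]_m'.+1,
           frakB M n 'X^(m'.+1) 'X^kp 'X^km 1 t <-> calF M n A B t)).
Proof.
move=> n2 _ _ minM /andP[kp1 _] /andP[km1 _] k_sum.
move=> [A [B [_ [_ [hAB frakB_calF]]]]].
have q1 : 'X^(m'.+1) %/ ('X^kp * 'X^km) = 1 :> {poly F}.
  by rewrite -exprD k_sum divpp // monic_neq0 // monicXn.
have one_range : (1 <= 1 <= n.-1)%N by lia.
have AMkp : A * M ^+ kp = 0.
  have := frakB_single_upper M 1 q1 1 one_range.
  rewrite [horner_mx M 1]rmorph1 mulr1 horner_mx_Xn.
  by move=> /frakB_calF /(calF_single_upper one_range)->.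
have BMkm : B * M ^+ km = 0.
  have := frakB_single_lower M 1 q1 1 one_range.
  rewrite [horner_mx M 1]rmorph1 mulr1 horner_mx_Xn.
  by move=> /frakB_calF /(calF_single_lower one_range)->.
apply/negP: (mxminpolyXn_expr_neq0 minM); apply/negPn/eqP.
apply: (trivial_common_kernel_mulmx hAB).
  have -> : M ^+ m' = M ^+ kp * M ^+ km.-1 by rewrite -exprD; congr (_ ^+ _); lia.
  by rewrite [A *m _]mulmxA [A *m _]AMkp mul0mx.
have -> : M ^+ m' = M ^+ km * M ^+ kp.-1 by rewrite -exprD; congr (_ ^+ _); lia.
by rewrite [B *m _]mulmxA [B *m _]BMkm mul0mx.
Qed.
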